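(* Let $G$ be a connected chordal graph and let $v\in V(G)$. For any $x,y\in N_G(v)$, the distance between $x$ and $y$ in $G-v$ equals the distance between $x$ and $y$ in the induced subgraph $G[N_G(v)]$.
   Context: Graphs are finite, simple, undirected. A graph is chordal if it has no induced cycle of length at least 4. $N_G(v)$ is the open neighborhood of $v$. Distances are lengths (number of edges) of shortest paths, infinite if no path exists. *)

From mathcomp Require Import all_boot.
Set Implicit Arguments. Unset Strict Implicit. Unset Printing Implicit Defensive.

Section Graphs.
Variables (T : finType) (e : rel T).

Definition simple_graph : Prop := symmetric e /\ irreflexive e.

Definition nbhd (v : T) : {set T} := [set u | e v u].

Definition walk_in (S : {set T}) (x y : T) (n : nat) : Prop :=
  exists p : seq T,
    [/\ path e x p, last x p = y, size p = n & all (fun z => z \in S) (x :: p)].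

(* dist_is S x y d : the distance from x to y in G[S] is d,
   where None stands for infinite distance (no path). *)
Definition dist_is (S : {set T}) (x y : T) (d : option nat) : Prop :=
  match d with
  | Some n => walk_in S x y n /\ (forall m, m < n -> ~ walk_in S x y m)
  | None => forall m, ~ walk_in S x y m
  end.

Definition connected_graph : Prop := forall x y : T,
  exists n, walk_in [set: T] x y n.

Definition induced_cycle (c : seq T) : Prop :=
  [/\ uniq c, cycle e c &
      forall x y, x \in c -> y \in c -> e x y -> (y == next c x) || (x == next c y)].

Definition chordal : Prop :=
  forall c : seq T, 4 <= size c -> ~ induced_cycle c.

End Graphs.

From mathcomp Require Import all_boot zify.
From Stdlib Require Import Classical.
Set Implicit Arguments. Unset Strict Implicit. Unset Printing Implicit Defensive.

(* Every walk in G - v between two neighbours x, y of v can be shortened to a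
   walk inside G[N(v)]. Take a shortest such walk of length at least 2. If an
   interior vertex is adjacent to v, split there and recurse. Otherwise the
   walk is an induced path whose interior misses N(v), so closing it up
   through v yields an induced cycle of length at least 4, which chordality
   forbids. *)

Section Walks.
Variables (T : finType) (e : rel T).
Implicit Types (A B : {set T}) (x y z : T) (p : seq T).

Lemma last_take_nth x p i : i <= size p -> last x (take i p) = nth x (x :: p) i.
Proof.
move=> le_ip; rewrite (last_nth x) size_takel //.
by have -> : x :: take i p = take i.+1 (x :: p) by []; rewrite nth_take.
Qed.

Lemma last_drop_nth x p i : i <= size p -> last (nth x (x :: p) i) (drop i p) = last x p.
Proof. by move=> le_ip; rewrite -last_take_nth // -last_cat cat_take_drop. Qed.

Lemma nth_cons_in A x p i : all (fun z => z \in A) (x :: p) -> nth x (x :: p) i \in A.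
Proof.
move=> /allP inA; have [lt_i|le_i] := ltnP i (size (x :: p)).
  by rewrite inA // mem_nth.
by rewrite nth_default // inA // mem_head.
Qed.

Lemma walk_nil A x : x \in A -> walk_in e A x x 0.
Proof. by move=> xA; exists [::]; split => //=; rewrite xA. Qed.

Lemma walk_edge A x y : e x y -> x \in A -> y \in A -> walk_in e A x y 1.
Proof. by move=> exy xA yA; exists [:: y]; split => //=; rewrite ?exy ?xA ?yA. Qed.

Lemma walk_cat A x y z m n :
  walk_in e A x z m -> walk_in e A z y n -> walk_in e A x y (m + n).
Proof.
move=> [p1 [x_p1 <- <- A_p1]] [p2 [z_p2 <- <- A_p2]]; exists (p1 ++ p2); split.
- by rewrite cat_path x_p1 z_p2.
- by rewrite last_cat.
- by rewrite size_cat.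
- by rewrite -cat_cons all_cat A_p1; case/andP: A_p2.
Qed.

Lemma walk_in_sub A B x y n : A \subset B -> walk_in e A x y n -> walk_in e B x y n.
Proof.
move=> /subsetP sAB [p [x_p last_p size_p A_p]]; exists p; split => //.
exact: sub_all A_p.
Qed.

Lemma walk_prefix A x p i : path e x p -> all (fun z => z \in A) (x :: p) ->
  i <= size p -> walk_in e A x (nth x (x :: p) i) i.
Proof.
move=> x_p A_p le_ip; exists (take i p); split.
- exact: take_path.
- exact: last_take_nth.
- exact: size_takel.
- by move: A_p; rewrite -(cat_take_drop i.+1 (x :: p)) all_cat => /andP[].
Qed.

Lemma walk_suffix A x p i : path e x p -> all (fun z => z \in A) (x :: p) ->
  i <= size p -> walk_in e A (nth x (x :: p) i) (last x p) (size p - i).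
Proof.
move=> x_p A_p le_ip; exists (drop i p); split.
- by move: x_p; rewrite -[in path _ x p](cat_take_drop i p) cat_path last_take_nth // => /andP[].
- exact: last_drop_nth.
- exact: size_drop.
- move: A_p; rewrite -[in all _ (x :: p)](cat_take_drop i (x :: p)) all_cat (drop_nth x) ?ltnS //.
  by case/andP.
Qed.

Lemma walk_shortcut A x p i j k : path e x p -> all (fun z => z \in A) (x :: p) ->
  i <= j <= size p -> walk_in e A (nth x (x :: p) i) (nth x (x :: p) j) k ->
  walk_in e A x (last x p) (i + k + (size p - j)).
Proof.
move=> x_p A_p /andP[le_ij le_jp] w_ij.
apply: walk_cat (walk_suffix x_p A_p le_jp); apply: walk_cat w_ij.
exact/walk_prefix/(leq_trans le_ij).
Qed.

Section ShortestWalk.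
Variables (A : {set T}) (x : T) (p : seq T).
Hypotheses (x_p : path e x p) (A_p : all (fun z => z \in A) (x :: p)).
Hypothesis shortest : forall m, m < size p -> ~ walk_in e A x (last x p) m.

Lemma shortest_walk_uniq : uniq (x :: p).
Proof.
have [//|/(uniqPn x)[i [j [lt_ij lt_j eq_ij]]]] := boolP (uniq (x :: p)).
case: (shortest (m := i + 0 + (size p - j))); first by rewrite /= in lt_j; lia.
apply: walk_shortcut => //; first by rewrite /= in lt_j; lia.
by rewrite eq_ij; apply/walk_nil/nth_cons_in.
Qed.

Lemma shortest_walk_chordless i j : i.+1 < j -> j <= size p ->
  ~~ e (nth x (x :: p) i) (nth x (x :: p) j).
Proof.
move=> lt_ij le_jp; apply/negP => e_ij.
case: (shortest (m := i + 1 + (size p - j))); first lia.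
apply: walk_shortcut => //; first lia.
by apply: walk_edge => //; apply: nth_cons_in.
Qed.

End ShortestWalk.

Section InducedCycle.
Hypotheses (sym : symmetric e) (irr : irreflexive e).
Variables (v x : T) (p : seq T).
Hypotheses (x_p : path e x p) (uniq_p : uniq (x :: p)) (v_p : v \notin x :: p).
Hypothesis chordless : forall i j, i.+1 < j -> j <= size p ->
  ~~ e (nth x (x :: p) i) (nth x (x :: p) j).
Hypothesis interior_off_v : forall i, 0 < i < size p -> ~~ e v (nth x (x :: p) i).
Hypotheses (e_vx : e v x) (e_vlast : e v (last x p)).

Local Notation c := (v :: x :: p).

Lemma next_cone_v : next c v = x.
Proof. by rewrite next_nth mem_head /= eqxx. Qed.

(* For the last vertex of the path the index runs past [x :: p], and the
   default of [nth] makes its successor the apex [v]. *)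
Lemma next_cone a : a \in x :: p -> next c a = nth v (x :: p) (index a (x :: p)).+1.
Proof.
move=> a_p; rewrite next_nth inE a_p orbT /=.
by case: eqP => // va; move: v_p; rewrite va a_p.
Qed.

Lemma cone_edge_path a b : a \in x :: p -> b \in x :: p ->
  index a (x :: p) < index b (x :: p) -> e a b -> b = next c a.
Proof.
move=> a_p b_p lt_ab e_ab; rewrite next_cone //.
have [lt_Sab|] := ltnP (index a (x :: p)).+1 (index b (x :: p)).
  have b_size : index b (x :: p) <= size p by rewrite -ltnS index_mem.
  by have := chordless lt_Sab b_size; rewrite !nth_index // e_ab.
move=> le_ba; have -> : (index a (x :: p)).+1 = index b (x :: p) by lia.
by rewrite nth_index.
Qed.

Lemma cone_edge_apex a : a \in x :: p -> e v a -> a = x \/ v = next c a.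
Proof.
move=> a_p e_va; rewrite next_cone //.
have a_size : index a (x :: p) <= size p by rewrite -ltnS index_mem.
case: (posnP (index a (x :: p))) => [i0|i_pos].
  by left; rewrite -(nth_index x a_p) i0.
right; have [lt_ip|] := ltnP (index a (x :: p)) (size p).
  have := interior_off_v (i := index a (x :: p)).
  by rewrite i_pos lt_ip nth_index // e_va => /(_ isT).
by move=> le_pi; rewrite nth_default //=; lia.
Qed.

Lemma induced_cycle_cone : induced_cycle e c.
Proof.
split.
- by rewrite cons_uniq v_p.
- by rewrite /= rcons_path e_vx x_p sym e_vlast.
move=> a b; rewrite [a \in _]in_cons [b \in _]in_cons.
move=> /predU1P[->|a_p] /predU1P[->|b_p] e_ab.
- by rewrite irr in e_ab.
- by rewrite next_cone_v; case: (cone_edge_apex b_p e_ab) => <-; rewrite eqxx ?orbT.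
- rewrite sym in e_ab; rewrite next_cone_v.
  by case: (cone_edge_apex a_p e_ab) => <-; rewrite eqxx ?orbT.
- case: (ltngtP (index a (x :: p)) (index b (x :: p))) => [lt_ab|lt_ba|eq_ab].
  + by rewrite -(cone_edge_path a_p b_p lt_ab e_ab) eqxx.
  + by rewrite sym in e_ab; rewrite -(cone_edge_path b_p a_p lt_ba e_ab) eqxx orbT.
  + by move: e_ab; rewrite -(nth_index x a_p) eq_ab nth_index // irr.
Qed.

End InducedCycle.

Lemma dist_is_sub_eq A B x y : A \subset B ->
  (forall n, walk_in e B x y n -> exists2 m, m <= n & walk_in e A x y m) ->
  forall d, dist_is e B x y d <-> dist_is e A x y d.
Proof.
move=> sAB shorten [n|] /=; split.
- move=> [w_n min_n]; have [m le_mn w_m] := shorten n w_n.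
  suff eq_mn : m = n by subst m; split=> // k lt_kn /(walk_in_sub sAB); exact: min_n.
  apply/eqP; rewrite eqn_leq le_mn leqNgt; apply/negP => lt_mn.
  exact: min_n lt_mn (walk_in_sub sAB w_m).
- move=> [w_n min_n]; split=> [|k lt_kn /shorten [m le_mk w_m]].
    exact: walk_in_sub w_n.
  by apply: (min_n m) => //; exact: leq_ltn_trans lt_kn.
- by move=> none k /(walk_in_sub sAB); exact: none.
- by move=> none k /shorten [m _]; exact: none.
Qed.

End Walks.

Section ChordalNeighbourhood.
Variables (T : finType) (e : rel T) (v : T).
Hypotheses (sym : symmetric e) (irr : irreflexive e) (chordal_e : chordal e).

Local Notation Gv := ([set: T] :\ v).

Lemma shortest_walk_meets_nbhd x p : path e x p -> all (fun z => z \in Gv) (x :: p) ->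
  1 < size p -> x \in nbhd e v -> last x p \in nbhd e v ->
  (forall m, m < size p -> ~ walk_in e Gv x (last x p) m) ->
  exists2 i, 0 < i < size p & nth x (x :: p) i \in nbhd e v.
Proof.
move=> x_p A_p lt_1p x_N last_N shortest; apply: NNPP => no_hit.
apply: (chordal_e (c := v :: x :: p)); first by rewrite /=; lia.
rewrite !inE in x_N last_N; apply: induced_cycle_cone => //.
- exact: shortest_walk_uniq x_p A_p shortest.
- by apply/negP => /(allP A_p); rewrite !inE eqxx.
- exact: shortest_walk_chordless x_p A_p shortest.
- by move=> i lt_i; apply/negP => e_vi; apply: no_hit; exists i; rewrite ?inE.
Qed.

Lemma nbhd_walk_shorten n x y : x \in nbhd e v -> y \in nbhd e v ->
  walk_in e Gv x y n -> exists2 m, m <= n & walk_in e (nbhd e v) x y m.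
Proof.
elim/ltn_ind: n x y => n IH x y x_N y_N [p [x_p last_p size_p A_p]].
have [[m lt_mn w_m]|shortest] := classic (exists2 m, m < n & walk_in e Gv x y m).
  have [k le_km w_k] := IH m lt_mn x y x_N y_N w_m.
  by exists k => //; exact: leq_trans le_km (ltnW lt_mn).
have [le_n1|lt_1n] := leqP n 1.
  exists n => //; exists p; split => //; rewrite -size_p in le_n1.
  by case: p {x_p size_p A_p} last_p le_n1 => [|z [|//]] /= => [_|->] _; rewrite x_N ?y_N.
have lt_1p : 1 < size p by rewrite size_p.
have last_N : last x p \in nbhd e v by rewrite last_p.
have shortest_p : forall m, m < size p -> ~ walk_in e Gv x (last x p) m.
  by rewrite last_p size_p => m lt_mn w_m; apply: shortest; exists m.
have [i /andP[lt_0i lt_in] i_N] :=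
  shortest_walk_meets_nbhd x_p A_p lt_1p x_N last_N shortest_p.
rewrite size_p in lt_in; have le_ip : i <= size p by rewrite size_p ltnW.
have [m1 le_m1 w1] := IH i lt_in x _ x_N i_N (walk_prefix x_p A_p le_ip).
have w_suffix := walk_suffix x_p A_p le_ip; rewrite last_p size_p in w_suffix.
have lt_ni : n - i < n by lia.
have [m2 le_m2 w2] := IH (n - i) lt_ni _ y i_N y_N w_suffix.
by exists (m1 + m2); [lia | exact: walk_cat w1 w2].
Qed.

End ChordalNeighbourhood.

Theorem lemma5 (T : finType) (e : rel T) (v : T) :
  simple_graph e -> connected_graph e -> chordal e ->
  forall x y : T, x \in nbhd e v -> y \in nbhd e v ->
  forall d : option nat,
    dist_is e ([set: T] :\ v) x y d <-> dist_is e (nbhd e v) x y d.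
Proof.
move=> [sym irr] _ chordal_e x y x_N y_N; apply: dist_is_sub_eq.
- apply/subsetP => z; rewrite !inE andbT; apply: contraL => /eqP ->.
  by rewrite irr.
- by move=> n; exact: nbhd_walk_shorten.
Qed.
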